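(* Let $n>2$. If $n$ is odd, the Gale dual of $P(D_n)$ is (up to linear change of coordinates) a vector configuration in $\mathbb{R}$ consisting of $n$ copies of each of the vectors $1$ and $-1$. If $n=2m$ is even, the Gale dual of $P(D_n)$ is (up to linear change of coordinates) the vector configuration in $\mathbb{R}^2$ consisting of $m$ copies of each of the four vectors $[\pm1,0]^T$, $[0,\pm1]^T$.
   Context: Each $g\in S_n$ is identified with its $n\times n$ permutation matrix (entry $(i,j)$ is $1$ iff $g(i)=j$); $P(G)=\mathrm{conv}\{g:g\in G\}$. $D_n\le S_n$ is generated by $r=(1\ 2\ \cdots\ n)$ and $f=(1\ n)(2\ n-1)\cdots(\lfloor\frac{n+1}{2}\rfloor\ \lceil\frac{n+1}{2}\rceil)$. For a polytope with vertices $v_1,\dots,v_r$ and dimension $d$, its Gale dual is the configuration of columns $\overline{v}_1,\dots,\overline{v}_r\in\mathbb{R}^{r-d-1}$ of a matrix whose rows form a basis of the space of linear dependences $\{\lambda\in\mathbb{R}^r:\sum\lambda_iv_i=0\}$; it is unique up to linear change of coordinates. *)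

From mathcomp Require Import all_boot all_order all_algebra all_fingroup.
Set Implicit Arguments. Unset Strict Implicit. Unset Printing Implicit Defensive.
Import GRing.Theory Num.Theory.
Local Open Scope ring_scope.

(* Points are 0-indexed: 'I_n = {0,...,n-1} stands for {1,...,n}. *)
(* r = (1 2 ... n): i |-> i+1 mod n. *)
Definition rot_perm (n : nat) : {perm 'I_n} := perm (@ordS_inj n).
(* f = (1 n)(2 n-1)...: i |-> n+1-i, i.e. 0-indexed i |-> n-1-i. *)
Definition flip_perm (n : nat) : {perm 'I_n} := perm (@rev_ord_inj n).

Definition dihedral (n : nat) : {set {perm 'I_n}} :=
  <<[set rot_perm n; flip_perm n]>>%g.

(* Permutation matrix: perm_mx g i j = 1 iff g i = j (mathcomp convention). *)
Definition pmx (R : pzRingType) (n : nat) (g : {perm 'I_n}) : 'M[R]_n :=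
  perm_mx g.

Definition is_dependence (R : pzRingType) (n : nat) (G : {set {perm 'I_n}})
  (lam : {perm 'I_n} -> R) : Prop :=
  \sum_(g in G) lam g *: pmx R g = 0.

(* Gale dual: c g (in R^k, a row vector) is the column of the Gale matrix
   indexed by vertex g; the k rows  (g |-> c g 0 j)  must form a basis of the
   space of linear dependences of the vertices {pmx g | g in G}. *)
Definition is_gale_dual (R : fieldType) (n k : nat) (G : {set {perm 'I_n}})
  (c : {perm 'I_n} -> 'rV[R]_k) : Prop :=
  (forall lam : {perm 'I_n} -> R,
      is_dependence G lam <->
      exists a : 'rV[R]_k, forall g, g \in G -> lam g = \sum_(j < k) a 0 j * c g 0 j)
  /\
  (forall a : 'rV[R]_k,
      (forall g, g \in G -> \sum_(j < k) a 0 j * c g 0 j = 0) -> a = 0).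

Definition vec1 (R : pzRingType) (x : R) : 'rV[R]_1 := \row_(j < 1) x.
Definition vec2 (R : pzRingType) (x y : R) : 'rV[R]_2 :=
  \row_(j < 2) (if j == ord0 then x else y).
Arguments vec1 {R} x.
Arguments vec2 {R} x y.

From mathcomp Require Import all_boot all_order all_algebra all_fingroup.
From mathcomp Require Import ring lra.
Import GRing.Theory Num.Theory.
Set Implicit Arguments.
Unset Strict Implicit.
Unset Printing Implicit Defensive.
Local Open Scope ring_scope.

(* Identify the points with Z/nZ.  Then D_n consists of the rotations
   x |-> x + k and the reflections x |-> k - x, and entry (i, j) of
   sum_g lam_g g is lam(rot (j - i)) + lam(refl (i + j)).  So lam is a
   dependence iff lam(rot d) = - lam(refl e) whenever e - d lies in 2(Z/nZ).
   For odd n, 2 is invertible and the dependences form the line spanned by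
   (1 on rotations, -1 on reflections); for even n, lam may depend on the
   parity of d and e, giving one Gale coordinate per parity class. *)

Lemma count_parity_iota (m : nat) (o : bool) :
  count (fun k => odd k == o) (iota 0 m.*2) = m.
Proof.
elim: m => [|m IHm] //; rewrite doubleS -addn2 iotaD count_cat IHm /= add0n.
by rewrite odd_double; case: (o); rewrite /= ?addn0 ?addn1.
Qed.

Lemma card_ord_parity (n : nat) (o : bool) :
  ~~ odd n -> #|[set k : 'I_n | odd k == o]| = n./2.
Proof.
move=> even_n; rewrite -sum1dep_card -(big_mkord (fun k => odd k == o) (fun=> 1%N)).
rewrite sum1_count /index_iota subn0 -[in iota _ n](odd_double_half n) (negbTE even_n).
exact: count_parity_iota.
Qed.

Section Dihedral.
(* Writing n as p.+3 equips 'I_n with the ring structure of Z/nZ. *)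
Variable p : nat.
Local Notation N := p.+3.
Local Notation T := 'I_N.

Definition rotation (k : T) : {perm T} := perm (@addIr _ k).

Definition reflection (k : T) : {perm T} := perm (@subrI _ k).

Lemma rotationE k i : rotation k i = i + k. Proof. by rewrite permE. Qed.
Lemma reflectionE k i : reflection k i = k - i. Proof. by rewrite permE. Qed.

Lemma rotationM a b : (rotation a * rotation b)%g = rotation (a + b).
Proof. by apply/permP => i; rewrite permM !rotationE addrA. Qed.
Lemma rotation_reflectionM a b : (rotation a * reflection b)%g = reflection (b - a).
Proof. by apply/permP => i; rewrite permM rotationE !reflectionE; ring. Qed.
Lemma reflection_rotationM a b : (reflection a * rotation b)%g = reflection (a + b).
Proof. by apply/permP => i; rewrite permM rotationE !reflectionE; ring. Qed.
Lemma reflectionM a b : (reflection a * reflection b)%g = rotation (b - a).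
Proof. by apply/permP => i; rewrite permM rotationE !reflectionE; ring. Qed.

Lemma rotationX (j : nat) : (rotation 1%R ^+ j)%g = rotation j%:R.
Proof.
elim: j => [|j IHj]; first by apply/permP => i; rewrite perm1 rotationE addr0.
by rewrite expgSr IHj rotationM -[j.+1]addn1 natrD.
Qed.

Lemma rot_perm_rotation : rot_perm N = rotation 1.
Proof.
by apply/permP => i; rewrite !permE; apply: val_inj; rewrite /= modnDmr addn1.
Qed.

Lemma flip_perm_reflection : flip_perm N = reflection (-1).
Proof.
apply/permP => i; rewrite !permE; apply/eqP; rewrite eq_sym subr_eq eq_sym -addr_eq0.
rewrite -[X in X + _ + _]natr_Zp -[i in _ + i + _]natr_Zp -!natrD.
by rewrite -(natrD _ _ 1) addn1 -addSn subnSK // subnK 1?ltnW // (@pchar_Zp N).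
Qed.

Definition dihedral_set : {set {perm T}} :=
  [set rotation k | k in T] :|: [set reflection k | k in T].

Lemma group_set_dihedral : group_set dihedral_set.
Proof.
apply/group_setP; split.
  apply/setUP; left; apply/imsetP; exists 0 => //.
  by apply/permP => i; rewrite rotationE addr0 perm1.
move=> x y /setUP[]/imsetP[a _ ->] /setUP[]/imsetP[b _ ->]; apply/setUP.
- by left; apply/imsetP; exists (a + b); rewrite ?rotationM.
- by right; apply/imsetP; exists (b - a); rewrite ?rotation_reflectionM.
- by right; apply/imsetP; exists (a + b); rewrite ?reflection_rotationM.
- by left; apply/imsetP; exists (b - a); rewrite ?reflectionM.
Qed.

Lemma dihedralE : dihedral N = dihedral_set.
Proof.
apply/eqP; rewrite eqEsubset; apply/andP; split.
  rewrite /dihedral -[dihedral_set]/(gval (Group group_set_dihedral)) gen_subG.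
  apply/subsetP => x; rewrite !inE => /orP[]/eqP->; apply/orP.
    by left; apply/imsetP; exists 1; rewrite ?rot_perm_rotation.
  by right; apply/imsetP; exists (-1); rewrite ?flip_perm_reflection.
have rotation_in k : rotation k \in dihedral N.
  rewrite -(natr_Zp k) -rotationX groupX // mem_gen //.
  by rewrite !inE -rot_perm_rotation eqxx.
apply/subsetP => x /setUP[]/imsetP[k _ ->]; first exact: rotation_in.
rewrite -[k](addKr 1) -reflection_rotationM groupM ?rotation_in //.
by rewrite mem_gen // !inE -flip_perm_reflection eqxx orbT.
Qed.

(* Makes sense on all of S_n; on D_n it tells rotations from reflections
   because 2 != 0 in Z/nZ. *)
Definition is_rotation (g : {perm T}) : bool := g 1 == g 0 + 1.

Lemma is_rotation_rotation k : is_rotation (rotation k).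
Proof. by rewrite /is_rotation !rotationE add0r addrC. Qed.

Lemma is_rotation_reflection k : ~~ is_rotation (reflection k).
Proof.
rewrite /is_rotation !reflectionE subr0 (inj_eq (addrI k)).
by rewrite eq_sym -subr_eq0 opprK.
Qed.

Lemma rotation_inj : injective rotation.
Proof. by move=> a b /permP/(_ 0); rewrite !rotationE !add0r. Qed.

Lemma reflection_inj : injective reflection.
Proof. by move=> a b /permP/(_ 0); rewrite !reflectionE !subr0. Qed.

Lemma mem_dihedral_rotation k : rotation k \in dihedral N.
Proof. by rewrite dihedralE inE; apply/orP; left; apply/imsetP; exists k. Qed.

Lemma mem_dihedral_reflection k : reflection k \in dihedral N.
Proof. by rewrite dihedralE inE; apply/orP; right; apply/imsetP; exists k. Qed.

Lemma dihedral_ind (P : {perm T} -> Prop) :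
  (forall k, P (rotation k)) -> (forall k, P (reflection k)) ->
  {in dihedral N, forall g, P g}.
Proof. by move=> Prot Prefl g; rewrite dihedralE inE => /orP[]/imsetP[k _ ->]. Qed.

Lemma big_dihedral (R : Type) (idx : R) (op : Monoid.com_law idx) (F : {perm T} -> R) :
  \big[op/idx]_(g in dihedral N) F g =
  op (\big[op/idx]_k F (rotation k)) (\big[op/idx]_k F (reflection k)).
Proof.
rewrite dihedralE (eq_bigl [predU [set rotation k | k in T] & [set reflection k | k in T]]);
  last by move=> g; rewrite !inE.
rewrite bigU; last first.
  rewrite disjoint_subset; apply/subsetP => _ /imsetP[a _ ->].
  rewrite inE; apply/imsetP => -[b _ eq_ab].
  by have := is_rotation_reflection b; rewrite -eq_ab is_rotation_rotation.
by rewrite !big_imset //; apply: in2W; [exact: reflection_inj | exact: rotation_inj].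
Qed.

Lemma sum_perm_mx_entry (R : pzRingType) (f : T -> {perm T}) (lam : {perm T} -> R) i j k0 :
  (forall k, (f k i == j) = (k == k0)) ->
  (\sum_k lam (f k) *: pmx R (f k)) i j = lam (f k0).
Proof.
move=> fij; rewrite summxE (bigD1 k0) //= big1 => [|k nk]; rewrite !mxE fij.
  by rewrite eqxx mulr1 addr0.
by rewrite (negbTE nk) mulr0.
Qed.

Lemma dihedral_combE (R : pzRingType) (lam : {perm T} -> R) i j :
  (\sum_(g in dihedral N) lam g *: pmx R g) i j =
  lam (rotation (j - i)) + lam (reflection (i + j)).
Proof.
rewrite big_dihedral mxE; congr (_ + _); apply: sum_perm_mx_entry => k.
  by rewrite rotationE [RHS]eq_sym subr_eq addrC.
by rewrite reflectionE subr_eq addrC.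
Qed.

Lemma is_dependence_dihedralP (R : pzRingType) (lam : {perm T} -> R) :
  is_dependence (dihedral N) lam <->
  forall i j, lam (rotation (j - i)) + lam (reflection (i + j)) = 0.
Proof.
split=> [dep i j | dep]; first by rewrite -dihedral_combE dep mxE.
by apply/matrixP => i j; rewrite dihedral_combE dep mxE.
Qed.

Section Dependence.
Variables (R : pzRingType) (lam : {perm T} -> R).
Hypothesis dep : forall i j, lam (rotation (j - i)) + lam (reflection (i + j)) = 0.

Lemma dependence_reflection k : lam (reflection k) = - lam (rotation k).
Proof. by apply/esym/addr0_eq; have := dep 0 k; rewrite subr0 add0r. Qed.

Lemma dependence_reflection_add2 k : lam (reflection (k + 2)) = lam (reflection k).
Proof.
have := dep 1 (k + 1); rewrite addrK addrCA => /addr0_eq <-.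
by rewrite dependence_reflection.
Qed.

Lemma dependence_reflection_add_even k m :
  lam (reflection (k + (2 * m)%:R)) = lam (reflection k).
Proof.
elim: m => [|m IHm]; first by rewrite addr0.
by rewrite mulnS natrD addrA addrAC dependence_reflection_add2.
Qed.

Lemma dependence_rotation_parity k : lam (rotation k) = lam (rotation (odd k)%:R).
Proof.
apply: oppr_inj; rewrite -!dependence_reflection.
rewrite -{1}[k]natr_Zp -{1}(odd_double_half k) natrD -mul2n.
by rewrite dependence_reflection_add_even.
Qed.

Lemma dependence_rotation_const : odd N -> forall k, lam (rotation k) = lam (rotation 0).
Proof.
move=> odd_N k; apply: oppr_inj; rewrite -!dependence_reflection.
(* N.+1./2 is the inverse of 2 modulo the odd N. *)
have -> : k = 0 + (2 * (k * N.+1./2))%:R.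
  rewrite add0r mulnCA natrM natr_Zp mul2n even_halfK /=; last by rewrite negbK.
  by rewrite mulrS (@pchar_Zp N) // addr0 mulr1.
by rewrite dependence_reflection_add_even.
Qed.

End Dependence.

Lemma card_dihedral (P : bool -> T -> bool) :
  #|[set g in dihedral N | P (is_rotation g) (g 0)]| =
  (#|[set k | P true k]| + #|[set k | P false k]|)%N.
Proof.
rewrite -!sum1dep_card big_mkcondr big_dihedral -!big_mkcond /=.
congr (_ + _)%N; apply: eq_bigl => k.
  by rewrite is_rotation_rotation rotationE add0r.
by rewrite (negbTE (is_rotation_reflection k)) reflectionE subr0.
Qed.

Lemma odd_sub_add : ~~ odd N -> forall i j : T, odd (val (j - i)) = odd (val (i + j)).
Proof.
move=> /negbTE odd_N i j.
rewrite /= !odd_mod // oddD odd_mod // oddN //; last exact: ltnW.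
by rewrite oddD addbC.
Qed.

Section GaleDual.
Variable R : realFieldType.

Definition bsign (b : bool) : R := if b then 1 else -1.

Lemma bsign_inj : injective bsign.
Proof. by case=> [] [] // /eqP; rewrite /bsign => /eqP; lra. Qed.

Definition gale_odd (g : {perm T}) : 'rV[R]_1 := vec1 (bsign (is_rotation g)).

Definition gale_even_vec (r o : bool) : 'rV[R]_2 :=
  if o then vec2 0 (bsign r) else vec2 (bsign r) 0.

Definition gale_even (g : {perm T}) : 'rV[R]_2 :=
  gale_even_vec (is_rotation g) (odd (g 0)).

Lemma vec1_inj : injective (@vec1 R).
Proof. by move=> x y /rowP/(_ 0); rewrite !mxE. Qed.

Lemma vec2_eq (x y x' y' : R) : (vec2 x y == vec2 x' y') = (x == x') && (y == y').
Proof.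
apply/eqP/andP => [/rowP eq_xy | [/eqP-> /eqP->]] //.
by have := eq_xy 0; have := eq_xy 1; rewrite !mxE /= => -> ->.
Qed.

Lemma bsign_neq0 b : bsign b != 0.
Proof. by case: b; rewrite /bsign ?oppr_eq0 oner_eq0. Qed.

Lemma gale_even_vec_eq r o r' o' :
  (gale_even_vec r o == gale_even_vec r' o') = (r == r') && (o == o').
Proof.
rewrite /gale_even_vec; case: o o' => [] [];
  rewrite vec2_eq ?eqxx ?(inj_eq bsign_inj) ?andbT ?andbF //=.
  by rewrite (negbTE (bsign_neq0 _)) andbF.
by rewrite (negbTE (bsign_neq0 _)).
Qed.

Lemma gale_odd_rotation k : gale_odd (rotation k) = vec1 1.
Proof. by rewrite /gale_odd is_rotation_rotation. Qed.

Lemma gale_odd_reflection k : gale_odd (reflection k) = vec1 (-1).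
Proof. by rewrite /gale_odd (negbTE (is_rotation_reflection k)). Qed.

Lemma gale_even_rotation k : gale_even (rotation k) = gale_even_vec true (odd k).
Proof. by rewrite /gale_even is_rotation_rotation rotationE add0r. Qed.

Lemma gale_even_reflection k : gale_even (reflection k) = gale_even_vec false (odd k).
Proof. by rewrite /gale_even (negbTE (is_rotation_reflection k)) reflectionE subr0. Qed.

Lemma dot_vec1 (a : 'rV[R]_1) x : \sum_(j < 1) a 0 j * vec1 x 0 j = a 0 0 * x.
Proof. by rewrite big_ord1 mxE. Qed.

Lemma dot_gale_even_vec (a : 'rV[R]_2) r o :
  \sum_(j < 2) a 0 j * gale_even_vec r o 0 j = (if o then a 0 1 else a 0 0) * bsign r.
Proof.
rewrite big_ord_recr big_ord1.
have -> : widen_ord (leqnSn 1) ord0 = 0 :> 'I_2 by apply: val_inj.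
have -> : ord_max = 1 :> 'I_2 by apply: val_inj.
by case: o; rewrite !mxE /= ?mulr0 ?addr0 ?add0r.
Qed.

Lemma is_gale_dual_odd : odd N -> is_gale_dual (dihedral N) gale_odd.
Proof.
move=> odd_N; split=> [lam | a a_null].
  split=> [/is_dependence_dihedralP dep | [a lamE]].
    exists (vec1 (lam (rotation 0))); apply: dihedral_ind => k.
      by rewrite gale_odd_rotation dot_vec1 mxE mulr1 (dependence_rotation_const dep).
    rewrite gale_odd_reflection dot_vec1 mxE mulrN1 (dependence_reflection dep).
    by rewrite (dependence_rotation_const dep).
  apply/is_dependence_dihedralP => i j.
  rewrite !lamE ?mem_dihedral_rotation ?mem_dihedral_reflection //.
  by rewrite gale_odd_rotation gale_odd_reflection !dot_vec1 mulrN1 mulr1 subrr.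
apply/rowP => j; rewrite ord1 mxE; have := a_null _ (mem_dihedral_rotation 0).
by rewrite gale_odd_rotation dot_vec1 mulr1.
Qed.

Lemma is_gale_dual_even : ~~ odd N -> is_gale_dual (dihedral N) gale_even.
Proof.
move=> even_N; split=> [lam | a a_null].
  split=> [/is_dependence_dihedralP dep | [a lamE]].
    exists (vec2 (lam (rotation 0)) (lam (rotation 1))); apply: dihedral_ind => k.
      rewrite gale_even_rotation dot_gale_even_vec (dependence_rotation_parity dep).
      by case: (odd k); rewrite !mxE /= mulr1.
    rewrite gale_even_reflection dot_gale_even_vec (dependence_reflection dep).
    by rewrite (dependence_rotation_parity dep); case: (odd k); rewrite !mxE /= mulrN1.
  apply/is_dependence_dihedralP => i j.
  rewrite !lamE ?mem_dihedral_rotation ?mem_dihedral_reflection //.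
  rewrite gale_even_rotation gale_even_reflection !dot_gale_even_vec odd_sub_add //.
  by rewrite /bsign mulrN1 mulr1 subrr.
have := a_null _ (mem_dihedral_rotation 0); have := a_null _ (mem_dihedral_rotation 1).
rewrite !gale_even_rotation !dot_gale_even_vec !mulr1 => a1 a0.
apply/rowP => -[[|[|//]] j_lt]; rewrite mxE; [rewrite -a0 | rewrite -a1];
  congr (a 0 _); exact: val_inj.
Qed.

Lemma card_gale_odd r : #|[set g in dihedral N | gale_odd g == vec1 (bsign r)]| = N.
Proof.
have -> : [set g in dihedral N | gale_odd g == vec1 (bsign r)] =
          [set g in dihedral N | is_rotation g == r].
  by apply/setP => g; rewrite !inE /gale_odd (inj_eq vec1_inj) (inj_eq bsign_inj).
rewrite (card_dihedral (fun r' _ => r' == r)); case: r.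
  by rewrite -[LHS]/(#|[set: T]| + #|@set0 T|)%N cardsT cards0 card_ord addn0.
by rewrite -[LHS]/(#|@set0 T| + #|[set: T]|)%N cardsT cards0 card_ord.
Qed.

Lemma card_gale_even r o :
  ~~ odd N -> #|[set g in dihedral N | gale_even g == gale_even_vec r o]| = N./2.
Proof.
move=> even_N.
have -> : [set g in dihedral N | gale_even g == gale_even_vec r o] =
          [set g in dihedral N | (is_rotation g == r) && (odd (g 0) == o)].
  by apply/setP => g; rewrite !inE gale_even_vec_eq.
rewrite (card_dihedral (fun r' k => (r' == r) && (odd k == o))); case: r.
  by rewrite -[LHS]/(#|[set k : T | odd k == o]| + #|@set0 T|)%N cards0 addn0 card_ord_parity.
by rewrite -[LHS]/(#|@set0 T| + #|[set k : T | odd k == o]|)%N cards0 card_ord_parity.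
Qed.

End GaleDual.

End Dihedral.

Theorem lemma8 (R : realFieldType) (n : nat) :
  (2 < n)%N ->
  (odd n ->
    exists c : {perm 'I_n} -> 'rV[R]_1,
      is_gale_dual (dihedral n) c /\
      (forall g, g \in dihedral n -> c g = vec1 1 \/ c g = vec1 (-1)) /\
      #|[set g in dihedral n | c g == vec1 1]| = n /\
      #|[set g in dihedral n | c g == vec1 (-1)]| = n) /\
  (forall m : nat, n = (2 * m)%N ->
    exists c : {perm 'I_n} -> 'rV[R]_2,
      is_gale_dual (dihedral n) c /\
      (forall g, g \in dihedral n ->
         [\/ c g = vec2 1 0, c g = vec2 (-1) 0, c g = vec2 0 1 | c g = vec2 0 (-1)]) /\
      #|[set g in dihedral n | c g == vec2 1 0]| = m /\
      #|[set g in dihedral n | c g == vec2 (-1) 0]| = m /\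
      #|[set g in dihedral n | c g == vec2 0 1]| = m /\
      #|[set g in dihedral n | c g == vec2 0 (-1)]| = m).
Proof.
case: n => [|[|[|p]]] // _; split=> [odd_n | m n_eq].
  exists (@gale_odd p R); split; first exact: is_gale_dual_odd.
  split; first by move=> g _; rewrite /gale_odd; case: is_rotation; [left | right].
  by split; [exact: (@card_gale_odd p R true) | exact: (@card_gale_odd p R false)].
have even_n : ~~ odd p.+3 by rewrite n_eq mul2n odd_double.
have -> : m = p.+3./2 by rewrite n_eq mul2n doubleK.
exists (@gale_even p R); split; first exact: is_gale_dual_even.
split.
  move=> g _; rewrite /gale_even /gale_even_vec; case: is_rotation; case: odd;
    [exact: Or43 | exact: Or41 | exact: Or44 | exact: Or42].
split; first exact: (@card_gale_even p R true false even_n).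
split; first exact: (@card_gale_even p R false false even_n).
split; first exact: (@card_gale_even p R true true even_n).
exact: (@card_gale_even p R false true even_n).
Qed.
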